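(* Let $M$ be an $n\times n$ integer matrix with $|\det M|=2$ and all eigenvalues of modulus $>1$, let $e\in\mathbb Z^n\setminus M\mathbb Z^n$, $k_1=-\tfrac12 e$, $k_2=\tfrac12 e$, $f_j(x)=M^{-1}(x+k_j)$, and $T=f_1(T)\cup f_2(T)$ the corresponding twindragon, with neighbor graph $G=(V,E)$. Suppose $0=v_0,v_1,v_2,\dots$ is an infinite sequence in $V$ and $s_1s_2\dots\in\{1,2\}^{\mathbb N}$ such that for every $t\ge1$, $$v_t=Mv_{t-1}+k_{3-s_t}-k_{s_t}$$ (i.e. an infinite directed path in $G$ from the root with labels $s_1s_2\dots$ using no ''double arrow'' $v_t=Mv_{t-1}$). Then $\pi(s_1s_2\dots)=0$, the symmetry center of $T$.
   Context: $B_k=T\cap(T+k)$. Neighbor graph $G=(V,E)$: $V=\{k\in\mathbb Z^n: B_k\neq\emptyset\}$; for $k,k'\in V$ there is an edge from $k$ to $k'$ with label $i\in\{1,2\}$ iff $k'=Mk+k_j-k_i$ for some $j\in\{1,2\}$. The address map is $\pi(s_1s_2\dots)=\bigcap_q f_{s_1}\circ\dots\circ f_{s_q}(T)$. $T=-T$. *)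

From HB Require Import structures.
From mathcomp Require Import all_boot all_order all_algebra all_field.
From Stdlib Require Import Reals.
Set Implicit Arguments. Unset Strict Implicit. Unset Printing Implicit Defensive.

Definition vec (n : nat) := 'I_n -> R.

Definition int_to_R (z : int) : R :=
  match z with Posz m => INR m | Negz m => Ropp (INR (S m)) end.

Definition vadd n (x y : vec n) : vec n := fun i => Rplus (x i) (y i).
Definition vsub n (x y : vec n) : vec n := fun i => Rminus (x i) (y i).
Definition vscale n (c : R) (x : vec n) : vec n := fun i => Rmult c (x i).
Definition vzero n : vec n := fun _ => R0.

Definition cvR n (v : 'cV[int]_n) : vec n := fun i => int_to_R (v i ord0).

Definition mxvR n (A : 'I_n -> 'I_n -> R) (x : vec n) : vec n :=
  fun i => \big[Rplus/R0]_(j < n) Rmult (A i j) (x j).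

Definition mxR n (M : 'M[int]_n) : 'I_n -> 'I_n -> R :=
  fun i j => int_to_R (M i j).

Definition invR n (M : 'M[int]_n) : 'I_n -> 'I_n -> R :=
  fun i j => Rdiv (int_to_R (\adj M i j)) (int_to_R (\det M)).

(* digits k_1 = -e/2, k_2 = e/2 (k_j for j not in {1,2} is junk = 0) *)
Definition kdig n (e : 'cV[int]_n) (j : nat) : vec n :=
  if j == 1%N then vscale (Ropp (/2)) (cvR e)
  else if j == 2%N then vscale (/2) (cvR e)
  else @vzero n.

Definition fmap n (M : 'M[int]_n) (e : 'cV[int]_n) (j : nat) (x : vec n) : vec n :=
  mxvR (invR M) (vadd x (kdig e j)).

Definition fimg n (M : 'M[int]_n) (e : 'cV[int]_n) (j : nat) (A : vec n -> Prop)
  : vec n -> Prop := fun y => exists x, A x /\ y = fmap M e j x.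

(* cimg s i q A = f_{s_i} o f_{s_(i+1)} o ... o f_{s_(i+q-1)} (A) *)
Fixpoint cimg n (M : 'M[int]_n) (e : 'cV[int]_n) (s : nat -> nat) (i q : nat)
  (A : vec n -> Prop) : vec n -> Prop :=
  match q with
  | O => A
  | S q' => fimg M e (s i) (cimg M e s (S i) q' A)
  end.

Definition vbounded n (A : vec n -> Prop) : Prop :=
  exists B : R, forall x, A x -> forall i, Rle (Rabs (x i)) B.
Definition vclosed n (A : vec n -> Prop) : Prop :=
  forall (u : nat -> vec n) (x : vec n),
    (forall m, A (u m)) -> (forall i, Un_cv (fun m => u m i) (x i)) -> A x.
Definition vcompact n (A : vec n -> Prop) : Prop := vclosed A /\ vbounded A.

Definition is_attractor n (M : 'M[int]_n) (e : 'cV[int]_n) (T : vec n -> Prop) : Prop :=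
  (exists x, T x) /\ vcompact T /\
  (forall x, T x <-> (fimg M e 1 T x \/ fimg M e 2 T x)).

Definition vtrans n (T : vec n -> Prop) (k : vec n) : vec n -> Prop :=
  fun x => exists y, T y /\ x = vadd y k.

(* vertex set of the neighbor graph: k in Z^n with B_k = T n (T+k) nonempty *)
Definition in_V n (T : vec n -> Prop) (k : 'cV[int]_n) : Prop :=
  exists x, T x /\ vtrans T (cvR k) x.

(* Write p_t := v_t / 2.  Since k_(3-j) = -k_j, the path equation halves to
   f_(s_t)(p_t) = p_(t-1), and p_t lies in (T - T)/2, so the p_t are bounded.
   All eigenvalues of M^-1 lie in the open unit disc, so by Schur
   triangularisation and a diagonal rescaling some power M^-N has row-sum norm
   < 1.  As M^-N = adj(M)^N / det(M)^N with |det M| = 2, this is an integer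
   statement, which gives the explicit contraction factor 1 - 2^-N on R^n.
   Hence f_(s_1) o ... o f_(s_q) shrinks bounded sets to points: each p_t is a
   limit of points of T, so lies in the closed set T, and then
   p_0 = f_(s_1) o ... o f_(s_q)(p_q) = 0 is the only point common to all the
   sets f_(s_1) o ... o f_(s_q)(T). *)

From HB Require Import structures.
From mathcomp Require Import all_boot all_order all_algebra all_field.
From mathcomp Require Import Rstruct.
From Stdlib Require Import Reals FunctionalExtensionality.
Import Order.TTheory GRing.Theory Num.Theory.
Set Implicit Arguments. Unset Strict Implicit. Unset Printing Implicit Defensive.
Local Open Scope ring_scope.

(** * Geometric decay *)

Section Geometric.
Variable F : archiNumFieldType.
Implicit Types c eps a K : F.

Lemma bernoulli_le (h : F) N : 0 <= h -> 1 + N%:R * h <= (1 + h) ^+ N.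
Proof.
move=> h0; elim: N => [|N IH]; first by rewrite mul0r addr0 expr0.
rewrite exprS -natr1 mulrDl mul1r addrA.
apply: le_trans (ler_wpM2l (addr_ge0 ler01 h0) IH).
by rewrite mulrDl mul1r lerD2l mulrDr mulr1 lerDl mulr_ge0 ?mulr_ge0.
Qed.

Lemma exists_expr_lt c eps : 0 <= c < 1 -> 0 < eps -> exists N, c ^+ N < eps.
Proof.
move=> /andP[c0 c1] eps0; have [->|cn0] := eqVneq c 0.
  by exists 1%nat; rewrite expr1.
have cp : 0 < c by rewrite lt_def cn0.
pose h := c^-1 - 1.
have h0 : 0 < h by rewrite subr_gt0 invf_gt1.
exists (Num.Def.archi_bound (eps^-1 / h)).
rewrite -[c]invrK exprVn invf_plt ?posrE ?exprn_gt0 ?invr_gt0 //.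
rewrite -[c^-1](subrK 1) addrC -/h.
apply: lt_le_trans (bernoulli_le _ (ltW h0)); rewrite ltr_wpDl //.
by rewrite -ltr_pdivrMr // archi_boundP // divr_ge0 // ltW ?invr_gt0.
Qed.

Lemma geometric_bound_eq0 a c K : 0 <= c < 1 ->
  (forall l, `|a| <= c ^+ l * K) -> a = 0.
Proof.
move=> c01 ha; apply/eqP; apply: contraT => an0.
have a0 : 0 < `|a| by rewrite normr_gt0.
have K0 : 0 < K by apply: (lt_le_trans a0); have := ha 0%nat; rewrite mul1r.
have [l hl] := exists_expr_lt c01 (divr_gt0 a0 K0).
by have := ha l; rewrite -ler_pdivrMr // => /(lt_le_trans hl); rewrite ltxx.
Qed.

End Geometric.

(** * Row-sum norm and spectral radius *)

Section RowNorm.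
Variable F : numDomainType.

Definition rownorm_le m n (A : 'M[F]_(m, n)) (c : F) :=
  forall i, \sum_j `|A i j| <= c.

Lemma rownorm_le_mul m n p (A : 'M[F]_(m, n)) (B : 'M[F]_(n, p)) a b :
  rownorm_le A a -> rownorm_le B b -> 0 <= b -> rownorm_le (A *m B) (a * b).
Proof.
move=> hA hB b0 i.
apply: le_trans (_ : \sum_j \sum_k `|A i k| * `|B k j| <= _).
  apply: ler_sum => j _; rewrite mxE; apply: le_trans (ler_norm_sum _ _ _) _.
  by apply: ler_sum => k _; rewrite normrM.
rewrite exchange_big /=.
apply: le_trans (ler_wpM2r b0 (hA i)).
by rewrite mulr_suml; apply: ler_sum => k _; rewrite -mulr_sumr ler_wpM2l.
Qed.

Lemma rownorm_le1 n : rownorm_le (1%:M : 'M[F]_n) 1.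
Proof.
move=> i; rewrite (bigD1 i) //= big1 ?addr0 => [|j /negbTE ji].
  by rewrite mxE eqxx normr1.
by rewrite mxE eq_sym ji normr0.
Qed.

Lemma rownorm_le_exp n (A : 'M[F]_n.+1) c N :
  0 <= c -> rownorm_le A c -> rownorm_le (A ^+ N) (c ^+ N).
Proof.
move=> c0 hA; elim: N => [|N IH]; first exact: rownorm_le1.
by rewrite !exprS; apply: rownorm_le_mul => //; apply: exprn_ge0.
Qed.

Lemma rownorm_le_sum m n (A : 'M[F]_(m, n)) :
  rownorm_le A (\sum_i \sum_j `|A i j|).
Proof.
move=> i; rewrite [leRHS](bigD1 i) //= lerDl.
by apply: sumr_ge0 => k _; apply: sumr_ge0.
Qed.

End RowNorm.

Lemma expr_conj (T : pzRingType) (l a r : T) N :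
  l * r = 1 -> r * l = 1 -> (l * a * r) ^+ N = l * a ^+ N * r.
Proof.
move=> lr rl; elim: N => [|N IH]; first by rewrite !expr0 mulr1.
by rewrite exprS IH -!mulrA (mulrA r) rl mul1r (mulrA a) -exprS mulrA.
Qed.

Lemma eigenvalue_trig (F : fieldType) n (U : 'M[F]_n) i :
  is_trig_mx U -> eigenvalue U (U i i).
Proof.
move=> hU; rewrite eigenvalue_root_char char_poly_trig // rootE horner_prod.
by rewrite (bigD1 i) //= hornerXsubC subrr mul0r.
Qed.

Lemma eigenvalue_invmx (F : fieldType) n (A : 'M[F]_n) d :
  A \in unitmx -> eigenvalue (invmx A) d -> d != 0 /\ eigenvalue A d^-1.
Proof.
move=> hA /eigenvalueP [w hw wn0].
have wE : w = d *: (w *m A) by rewrite scalemxAl -hw mulmxKV.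
have dn0 : d != 0 by apply: contraNneq wn0 => d0; rewrite wE d0 scale0r.
split => //; apply/eigenvalueP; exists w => //.
by rewrite {2}wE scalerA mulVf // scale1r.
Qed.

Section DiagonalScaling.
Variable F : numFieldType.

Definition scaling_mx n (d : F) : 'M[F]_n := diag_mx (\row_(i < n) d ^+ i).

Lemma scaling_mxE n (U : 'M[F]_n) x y i j :
  (scaling_mx n x *m U *m scaling_mx n y) i j = x ^+ i * U i j * y ^+ j.
Proof. by rewrite mul_mx_diag mxE mul_diag_mx !mxE. Qed.

Lemma scaling_mxV n (d : F) : d != 0 -> scaling_mx n d *m scaling_mx n d^-1 = 1%:M.
Proof.
move=> d0; apply/matrixP => i j; rewrite mul_diag_mx !mxE.
have [->|ij] := eqVneq i j; first by rewrite mulr1n exprVn mulfV // expf_neq0.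
by rewrite mulr0n mulr0.
Qed.

(* Conjugating a lower triangular U by diag(d^i) multiplies the entry (i, j)
   by d^(i-j), so for small d only the diagonal of U is felt. *)
Lemma rownorm_le_scaled_trig n (U : 'M[F]_n) (d rho K : F) :
  is_trig_mx U -> 0 < d -> d <= 1 ->
  (forall i, `|U i i| <= rho) -> rownorm_le U K ->
  rownorm_le (scaling_mx n d *m U *m scaling_mx n d^-1) (rho + d * K).
Proof.
move=> /is_trig_mxP hU d0 d1 hrho hK i.
rewrite (bigD1 i) //= scaling_mxE exprVn mulrAC mulfV ?expf_neq0 ?gt_eqF // mul1r.
apply: lerD; first exact: hrho.
have hoff : \sum_(j < n | j != i) d * `|U i j| <= d * K.
  rewrite -mulr_sumr; apply: ler_wpM2l; first exact: ltW.
  by apply: le_trans (hK i); rewrite [leRHS](bigD1 i) //= lerDr.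
apply: le_trans hoff; apply: ler_sum => j ji; rewrite scaling_mxE.
have [ij|ij|/val_inj ij] := ltngtP i j; last by rewrite ij eqxx in ji.
  by rewrite hU // mulr0 mul0r normr0 mulr_ge0 // ltW.
rewrite mulrAC exprVn -exprB ?unitfE ?gt_eqF ?(ltnW ij) //.
rewrite normrM ger0_norm; last by rewrite exprn_ge0 // ltW.
apply: ler_wpM2r; first exact: normr_ge0.
by rewrite -(subnSK ij) exprS ler_piMr ?exprn_ile1 // ltW.
Qed.

End DiagonalScaling.

Lemma trig_scaled_contraction (F : numFieldType) n (U : 'M[F]_n) :
  is_trig_mx U -> (forall i, `|U i i| < 1) ->
  exists2 d, 0 < d & exists2 c, 0 <= c < 1 &
    rownorm_le (scaling_mx n d *m U *m scaling_mx n d^-1) c.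
Proof.
(* The product of the factors 1 - |U k k|, all in (0, 1], is at most each of
   them, so rho bounds every |U k k| and stays below 1. *)
move=> hU hUdiag; pose rho := 1 - \prod_k (1 - `|U k k|).
have prod_ge k : 0 <= 1 - `|U k k| <= 1.
  by rewrite subr_ge0 (ltW (hUdiag k)) lerBlDr lerDl normr_ge0.
have prod_gt0 : 0 < \prod_k (1 - `|U k k|) by apply: prodr_gt0 => k _; rewrite subr_gt0.
have rho0 : 0 <= rho by rewrite subr_ge0 prodr_ile1.
have rho1 : 0 < 1 - rho by rewrite /rho subKr.
have rho_ge i : `|U i i| <= rho.
  rewrite /rho lerBrDr -lerBrDl (bigD1 i) //= ler_piMr ?subr_ge0 ?(ltW (hUdiag i)) //.
  exact: prodr_ile1.
pose K := \sum_i \sum_j `|U i j|.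
have K0 : 0 <= K by apply: sumr_ge0 => i _; apply: sumr_ge0.
have K1 : 0 < K + 1 := ltr_wpDl K0 ltr01.
pose d := (1 - rho) / (K + 1).
have d0 : 0 < d by rewrite divr_gt0.
have d1 : d <= 1.
  rewrite ler_pdivrMr // mul1r; apply: (@le_trans _ _ 1); last by rewrite lerDr.
  by rewrite lerBlDr lerDl.
exists d => //; exists (rho + d * K).
  apply/andP; split; first by rewrite addr_ge0 // mulr_ge0 // ltW.
  by rewrite -ltrBrDl /d mulrAC ltr_pdivrMr // ltr_pM2l // ltrDl ltr01.
exact: rownorm_le_scaled_trig hU d0 d1 rho_ge (rownorm_le_sum U).
Qed.

Lemma similar_contraction_exp (F : archiNumFieldType) n (B W L R : 'M[F]_n.+1) c :
  L * R = 1 -> R * L = 1 -> B = L * W * R -> 0 <= c < 1 -> rownorm_le W c ->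
  exists2 N, (0 < N)%nat & forall i, \sum_j `|(B ^+ N) i j| < 1.
Proof.
move=> LR RL -> c01 hW; have /andP[c0 c1] := c01.
pose a := \sum_i \sum_j `|L i j|; pose b := \sum_i \sum_j `|R i j|.
have b0 : 0 <= b by apply: sumr_ge0 => i _; apply: sumr_ge0.
have ab0 : 0 <= a * b by rewrite mulr_ge0 //; apply: sumr_ge0 => i _; apply: sumr_ge0.
have ab1 : 0 < a * b + 1 := ltr_wpDl ab0 ltr01.
have eps0 : 0 < (a * b + 1)^-1 by rewrite invr_gt0.
have [N hN] := exists_expr_lt c01 eps0.
exists N.+1 => // i; rewrite expr_conj //.
have /(_ i) := rownorm_le_mul (rownorm_le_mul (rownorm_le_sum L)
  (rownorm_le_exp N.+1 c0 hW) (exprn_ge0 _ c0)) (rownorm_le_sum R) b0.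
rewrite -!mulmxE => /le_lt_trans; apply.
rewrite mulrAC mulrC (@le_lt_trans _ _ (c ^+ N * (a * b + 1))) //.
  rewrite exprSr -mulrA; apply: ler_wpM2l; first exact: exprn_ge0.
  by apply: le_trans (ler_piMl ab0 (ltW c1)) _; rewrite lerDl.
by rewrite -ltr_pdivlMr // mul1r.
Qed.

Lemma spectral_contraction n (B : 'M[algC]_n.+1) :
  (forall d, eigenvalue B d -> `|d| < 1) ->
  exists2 N, (0 < N)%nat & forall i, \sum_j `|(B ^+ N) i j| < 1.
Proof.
move=> heig; have [P Pu hU] := Schur B (ltn0Sn n).
have Punit : P \in unitmx by exact: unitarymx_unit.
set U := conjmx P B in hU.
have [d d0 [c c01 hW]] : exists2 d, 0 < d & exists2 c, 0 <= c < 1 &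
    rownorm_le (scaling_mx n.+1 d *m U *m scaling_mx n.+1 d^-1) c.
  apply: trig_scaled_contraction => // i; apply: heig.
  apply: (eigenvalue_conjmx (stablemx_unit B Punit)); last exact: eigenvalue_trig.
  by rewrite row_free_unit.
have DD : scaling_mx n.+1 d^-1 *m scaling_mx n.+1 d = 1%:M.
  by rewrite -{2}(invrK d) scaling_mxV ?invr_eq0 ?gt_eqF.
apply: (similar_contraction_exp (L := invmx P *m scaling_mx n.+1 d^-1)
  (R := scaling_mx n.+1 d *m P) _ _ _ c01 hW); rewrite -!mulmxE.
- by rewrite mulmxA -(mulmxA _ _ (scaling_mx _ d)) DD mulmx1 mulVmx.
- by rewrite mulmxA -(mulmxA _ P) mulmxV // mulmx1 scaling_mxV ?gt_eqF.
rewrite /U conjumx // !mulmxA -(mulmxA (invmx P)) DD mulmx1 mulVmx // mul1mx.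
by rewrite -(mulmxA _ _ (scaling_mx _ d)) DD mulmx1 mulmxKV.
Qed.

(** * Integer matrices with determinant of modulus 2 *)

Lemma map_mx_int_unitmx (F : numFieldType) n (M : 'M[int]_n) :
  \det M != 0 -> (map_mx intr M : 'M[F]_n) \in unitmx.
Proof. by rewrite unitmxE det_map_mx unitfE intr_eq0. Qed.

Lemma rowsum_invmx_exp (F : numFieldType) n (M : 'M[int]_n.+1) N i :
  `|\det M| = 2 ->
  \sum_j `|(invmx (map_mx intr M : 'M[F]_n.+1) ^+ N) i j|
    = (\sum_j `|(\adj M ^+ N) i j|)%:~R / 2 ^+ N.
Proof.
move=> hdet; set Mf := map_mx intr M.
have detMf : `|\det Mf| = 2 by rewrite det_map_mx -intr_norm hdet.
have detM : \det M != 0 by rewrite -normr_eq0 hdet.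
rewrite /invmx map_mx_int_unitmx // exprZn -map_mx_adj -rmorphXn rmorph_sum mulr_suml /=.
by apply: eq_bigr => j _; rewrite !mxE normrM normrX normfV detMf -intr_norm exprVn mulrC.
Qed.

Lemma adj_exp_rowsum_lt n (M : 'M[int]_n.+1) :
  `|\det M| = 2 ->
  (forall a : algC, eigenvalue (map_mx intr M) a -> 1 < `|a|) ->
  exists2 N, (0 < N)%nat & forall i, \sum_j `|(\adj M ^+ N) i j| < 2 ^+ N.
Proof.
move=> hdet heig; set Mc : 'M[algC]_n.+1 := map_mx intr M.
have Mcunit : Mc \in unitmx by rewrite map_mx_int_unitmx // -normr_eq0 hdet.
have eigV d : eigenvalue (invmx Mc) d -> `|d| < 1.
  move=> /(eigenvalue_invmx Mcunit) [dn0 /heig].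
  by rewrite normfV invf_gt1 // normr_gt0.
have [N N0 hN] := spectral_contraction eigV.
exists N => // i; have := hN i; rewrite rowsum_invmx_exp // ltr_pdivrMr ?exprn_gt0 // mul1r.
by rewrite -(ltr_int algC) rmorphXn.
Qed.

Lemma invmx_exp_rownorm (F : numFieldType) n (M : 'M[int]_n.+1) N :
  `|\det M| = 2 -> (forall i, \sum_j `|(\adj M ^+ N) i j| < 2 ^+ N) ->
  rownorm_le (invmx (map_mx intr M : 'M[F]_n.+1) ^+ N) (1 - (2 ^+ N)^-1).
Proof.
move=> hdet hadj i; rewrite rowsum_invmx_exp // ler_pdivrMr ?exprn_gt0 //.
rewrite mulrBl mul1r mulVf ?expf_neq0 ?pnatr_eq0 // lerBrDr.
by have := hadj i; rewrite -lezD1 -(ler_int F) rmorphD rmorphXn.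
Qed.

(** * The iterated function system on real vectors *)

Lemma int_to_RE (z : int) : int_to_R z = z%:~R.
Proof. by case: z => m; rewrite /int_to_R ?NegzE INRE // mulrNz. Qed.

Section RealVectors.
Variable n : nat.
Implicit Types (u w : vec n) (A B : 'M[R]_n).

Lemma mxRE (M : 'M[int]_n) : mxR M = (map_mx intr M : 'M[R]_n).
Proof.
apply: functional_extensionality => i; apply: functional_extensionality => j.
by rewrite /mxR mxE int_to_RE.
Qed.

Lemma invRE (M : 'M[int]_n) :
  \det M != 0 -> invR M = invmx (map_mx intr M : 'M[R]_n).
Proof.
move=> detM; apply: functional_extensionality => i; apply: functional_extensionality => j.
rewrite /invR /invmx map_mx_int_unitmx // -map_mx_adj det_map_mx mxE [in RHS]mxE.
by rewrite !int_to_RE RdivE mulrC !mxE.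
Qed.

Lemma mxvR_mul A B u : mxvR A (mxvR B u) = mxvR (A *m B) u.
Proof.
apply: functional_extensionality => i; rewrite /mxvR.
under [RHS]eq_bigr do rewrite mxE RmultE mulr_suml.
rewrite exchange_big /=; apply: eq_bigr => j _.
by rewrite RmultE mulr_sumr; apply: eq_bigr => k _; rewrite !RmultE mulrA.
Qed.

Lemma mxvR1 u : mxvR 1%:M u = u.
Proof.
apply: functional_extensionality => i; rewrite /mxvR (bigD1 i) //= big1.
  by rewrite mxE eqxx RmultE mul1r RplusE addr0.
by move=> j ji; rewrite mxE eq_sym (negbTE ji) RmultE mul0r.
Qed.

Lemma mxvR_invR_mxR (M : 'M[int]_n) u :
  \det M != 0 -> mxvR (invR M) (mxvR (mxR M) u) = u.
Proof.
by move=> detM; rewrite invRE // mxRE mxvR_mul mulVmx ?map_mx_int_unitmx // mxvR1.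
Qed.

Lemma mxvR_sub A u w : mxvR A (vsub u w) = vsub (mxvR A u) (mxvR A w).
Proof.
apply: functional_extensionality => i; rewrite /mxvR /vsub RminusE -sumrB.
by apply: eq_bigr => j _; rewrite RminusE !RmultE mulrBr.
Qed.

Lemma mxvR_scale A c u : mxvR A (vscale c u) = vscale c (mxvR A u).
Proof.
apply: functional_extensionality => i; rewrite /mxvR /vscale RmultE mulr_sumr.
by apply: eq_bigr => j _; rewrite !RmultE mulrCA.
Qed.

Lemma mxvR_bound A c u K : rownorm_le A c -> 0 <= K ->
  (forall j, `|u j| <= K) -> forall i, `|mxvR A u i| <= c * K.
Proof.
move=> hA K0 hu i; rewrite /mxvR; apply: le_trans (ler_norm_sum _ _ _) _.
apply: le_trans (_ : \sum_j `|A i j| * K <= _).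
  by apply: ler_sum => j _; rewrite RmultE normrM ler_wpM2l.
by rewrite -mulr_suml ler_wpM2r.
Qed.

End RealVectors.

Lemma Un_cv_geometric (u : nat -> R) x c K : 0 <= c < 1 ->
  (forall l, `|u l - x| <= c ^+ l * K) -> Un_cv u x.
Proof.
move=> c01 hu eps /RltP eps0.
have K1 : 0 < `|K| + 1 := ltr_wpDl (normr_ge0 K) ltr01.
have [l0 hl0] := exists_expr_lt c01 (divr_gt0 eps0 K1).
exists l0 => l /ssrnat.leP l0l; rewrite /R_dist RabsE RminusE; apply/RltP.
have /andP[c0 c1] := c01.
apply: le_lt_trans (hu l) _; apply: le_lt_trans (_ : c ^+ l0 * (`|K| + 1) < _).
  apply: le_trans (ler_wpM2l (exprn_ge0 l c0) (ler_norm K)) _.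
  apply: le_trans (ler_wpM2r (normr_ge0 K) (ler_wiXn2l c0 (ltW c1) l0l)) _.
  by apply: ler_wpM2l; [exact: exprn_ge0 | rewrite lerDl].
by rewrite -ltr_pdivlMr.
Qed.

Section IteratedMaps.
Variables (n : nat) (M : 'M[int]_n.+1) (e : 'cV[int]_n.+1) (s : nat -> nat).
Hypothesis detM : \det M != 0.
Let A : 'M[R]_n.+1 := invmx (map_mx intr M).

Fixpoint fcomp (i q : nat) (y : vec n.+1) : vec n.+1 :=
  if q is q'.+1 then fmap M e (s i) (fcomp i.+1 q' y) else y.

Lemma fmap_sub j x y : vsub (fmap M e j x) (fmap M e j y) = mxvR A (vsub x y).
Proof.
rewrite /fmap (invRE detM) -mxvR_sub; congr mxvR.
by apply: functional_extensionality => i; rewrite /vsub /vadd; ring.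
Qed.

Lemma fcomp_sub i q x y :
  vsub (fcomp i q x) (fcomp i q y) = mxvR (A ^+ q) (vsub x y).
Proof.
elim: q i => [|q IH] i /=; first by rewrite expr0 mxvR1.
by rewrite fmap_sub IH mxvR_mul mulmxE -exprS.
Qed.

Lemma cimg_fcomp i q (X : vec n.+1 -> Prop) x :
  cimg M e s i q X x <-> exists2 y, X y & x = fcomp i q y.
Proof.
elim: q i x => [|q IH] i x /=; first by split=> [Xx|[y Xy ->]]; first exists x.
split=> [[z [/IH [y Xy ->] ->]]|[y Xy ->]]; first by exists y.
by exists (fcomp i.+1 q y); split => //; apply/IH; exists y.
Qed.

Lemma fcomp_stable i q (X : vec n.+1 -> Prop) y :
  (forall t z, (i <= t)%nat -> X z -> X (fmap M e (s t) z)) ->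
  X y -> X (fcomp i q y).
Proof.
move=> hX Xy; elim: q i hX => [|q IH] i hX //=.
by apply: (hX) => //; apply: IH => t z it; apply: hX; apply: ltnW.
Qed.

Lemma fcomp_chain (p : nat -> vec n.+1) t q :
  (forall t, fmap M e (s t.+1) (p t.+1) = p t) ->
  fcomp t.+1 q (p (t + q)%nat) = p t.
Proof.
move=> hp; elim: q t => [|q IH] t /=; first by rewrite addn0.
by rewrite addnS -addSn IH hp.
Qed.

End IteratedMaps.

Section ContractingChain.
Variables (n : nat) (M : 'M[int]_n.+1) (e : 'cV[int]_n.+1) (s : nat -> nat).
Variables (T : vec n.+1 -> Prop) (p : nat -> vec n.+1) (N : nat) (c B : R).
Hypothesis detM : \det M != 0.
Hypothesis N0 : (0 < N)%nat.
Hypothesis c01 : 0 <= c < 1.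
Hypothesis contr : rownorm_le (invmx (map_mx intr M : 'M[R]_n.+1) ^+ N) c.
Hypothesis T_closed : vclosed T.
Hypothesis T_ne : exists y, T y.
Hypothesis T_bound : forall y, T y -> forall j, `|y j| <= B.
Hypothesis T_stable : forall t y, (1 <= t)%nat -> T y -> T (fmap M e (s t) y).
Hypothesis p_bound : forall t j, `|p t j| <= B.
Hypothesis p_chain : forall t, fmap M e (s t.+1) (p t.+1) = p t.

Lemma fcomp_close i l y t : T y -> forall j,
  `|fcomp M e s i (l * N) y j - fcomp M e s i (l * N) (p t) j| <= c ^+ l * (B + B).
Proof.
have [y0 /T_bound /(_ ord0) B0] := T_ne.
move=> Ty j; have := fcomp_sub e s detM i (l * N) y (p t).
move=> /(congr1 (fun u => u j)); rewrite /vsub RminusE => ->.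
apply: mxvR_bound.
- by rewrite mulnC exprM; apply: rownorm_le_exp => //; case/andP: c01.
- by rewrite addr_ge0 // (le_trans (normr_ge0 _) B0).
- move=> k; rewrite /vsub RminusE; apply: le_trans (ler_normB _ _) _.
  exact: lerD (T_bound Ty k) (p_bound t k).
Qed.

Lemma chain_in_attractor t : T (p t).
Proof.
have [y0 Ty0] := T_ne.
apply: (T_closed (u := fun l => fcomp M e s t.+1 (l * N) y0)).
  move=> l; apply: (fcomp_stable _ _ Ty0) => t' z tt'.
  by apply: T_stable; apply: leq_trans tt'.
move=> j; apply: (Un_cv_geometric c01 (K := B + B)) => l.
by rewrite -[p t in X in `|_ - X j|](fcomp_chain t (l * N) p_chain); apply: fcomp_close.
Qed.

Lemma cimg_chain x : (forall q, (1 <= q)%nat -> cimg M e s 1 q T x) <-> x = p 0.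
Proof.
split=> [hx|-> q _]; last first.
  apply/cimg_fcomp; exists (p (0 + q)%nat); first exact: chain_in_attractor.
  by rewrite fcomp_chain.
apply: functional_extensionality => j; apply/eqP; rewrite -subr_eq0; apply/eqP.
apply: (geometric_bound_eq0 c01 (K := c * (B + B))) => l.
have lN0 : (0 < l.+1 * N)%nat by rewrite muln_gt0 N0.
have /cimg_fcomp [y Ty ->] := hx _ lN0.
rewrite -[p 0 in X in `|_ - X j|](fcomp_chain 0 (l.+1 * N) p_chain) mulrA -exprSr.
exact: fcomp_close.
Qed.

End ContractingChain.

Lemma attractor_stable n (M : 'M[int]_n) e T j y :
  is_attractor M e T -> (j = 1 \/ j = 2)%nat -> T y -> T (fmap M e j y).
Proof. by move=> [_ [_ hT]] hj Ty; apply/hT; case: hj => ->; [left|right]; exists y. Qed.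

Lemma in_V_half_bound n (T : vec n -> Prop) k B :
  (forall y, T y -> forall j, `|y j| <= B) -> in_V T k ->
  forall j, `|vscale (/2) (cvR k) j| <= B.
Proof.
move=> hB [x [Tx [y [Ty xE]]]] j.
have -> : vscale (/2) (cvR k) j = (x j - y j) / 2.
  by rewrite /vscale xE /vadd !RealsE addrC addKr mulrC.
rewrite normrM normfV normr_nat ler_pdivrMr // mulr_natr mulr2n.
by apply: le_trans (ler_normB _ _) _; apply: lerD; apply: hB.
Qed.

(* Since k_(3-j) = - k_j, halving the path equation gives
   v_t / 2 + k_j = M (v_(t-1) / 2), i.e. f_j (v_t / 2) = v_(t-1) / 2. *)
Lemma fmap_half_path n (M : 'M[int]_n) e j (u w : 'cV[int]_n) :
  \det M != 0 -> (j = 1 \/ j = 2)%nat ->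
  cvR w = vsub (vadd (mxvR (mxR M) (cvR u)) (kdig e (3 - j))) (kdig e j) ->
  fmap M e j (vscale (/2) (cvR w)) = vscale (/2) (cvR u).
Proof.
move=> detM hj hw; rewrite /fmap -(mxvR_invR_mxR (vscale (/2) (cvR u)) detM).
congr mxvR; rewrite mxRE mxvR_scale -mxRE; apply: functional_extensionality => i.
rewrite /vadd /vscale hw /vsub /vadd.
by case: hj => -> /=; rewrite /kdig /= /vscale; field.
Qed.

Theorem proposition12p3 (n : nat) (M : 'M[int]_n) (e : 'cV[int]_n)
  (T : vec n -> Prop)
  (hdet : `|\det M| = 2%:Z)
  (heig : forall a : algC,
      eigenvalue (map_mx (fun z : int => (z%:~R : algC)) M) a -> (1 < `|a|))
  (he : ~ (exists z : 'cV[int]_n, e = (M *m z)))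
  (hT : is_attractor M e T)
  (v : nat -> 'cV[int]_n) (s : nat -> nat)
  (hv0 : v 0%nat = 0)
  (hvV : forall t : nat, in_V T (v t))
  (hs : forall t : nat, (1 <= t)%nat -> s t = 1%nat \/ s t = 2%nat)
  (hpath : forall t : nat, (1 <= t)%nat ->
      cvR (v t) = vsub (vadd (mxvR (mxR M) (cvR (v t.-1))) (kdig e (3 - s t)%nat))
                       (kdig e (s t)))
  : forall x : vec n,
      (forall q : nat, (1 <= q)%nat -> cimg M e s 1 q T x) <-> x = @vzero n.
Proof.
case: n M e T v hdet heig hT hv0 hvV hpath {he} => [|n] M e T v hdet heig hT hv0 hvV hpath.
  by move: hdet; rewrite det_mx00.
have detM : \det M != 0 by rewrite -normr_eq0 hdet.
have [N N0 hadj] := adj_exp_rowsum_lt hdet heig.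
have c01 : 0 <= 1 - ((2%:R : R) ^+ N)^-1 < 1.
  rewrite subr_ge0 invf_le1 ?exprn_gt0 // exprn_ege1 ?ler1n //= ltrBlDr ltrDl invr_gt0.
  exact: exprn_gt0.
have [T_ne [[T_closed [B T_bound]] _]] := hT.
have {}T_bound y : T y -> forall j, `|y j| <= B.
  by move=> /T_bound hy j; rewrite -RabsE; apply/RleP.
pose p t := vscale (/2) (cvR (v t)).
have p0 : p 0%nat = @vzero n.+1.
  by apply: functional_extensionality => i; rewrite /p /vscale /cvR hv0 mxE /= RmultE mulr0.
move=> x; rewrite -p0; apply: (cimg_chain detM N0 c01 (invmx_exp_rownorm R hdet hadj)
  T_closed T_ne T_bound).
- by move=> t y t1; apply: attractor_stable => //; exact: hs.
- by move=> t; exact: in_V_half_bound T_bound (hvV t).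
- by move=> t; apply: fmap_half_path => //; [exact: hs | exact: hpath].
Qed.
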